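(* With $\mathcal{A}$ as in the context, let $n=\log_2(\alpha n_t n_x^\alpha)$ and $\Pi=\mathcal{A}\mathcal{A}^T$. Then $\Pi=\bigotimes_{m=1}^{n}\pi_m$ with each $\pi_m\in\{\rho_0,\rho_3,I_2\}$ (so $\Pi$ is a diagonal $0/1$ matrix), and the matrix $$U_1=\begin{pmatrix}I-\Pi&\Pi\\ \Pi&I-\Pi\end{pmatrix}=\sigma_x\otimes\Pi+I_2\otimes(I-\Pi)$$ is a single multi-controlled NOT gate $C^qX$: it applies $\sigma_x$ to the first (ancilla) qubit conditioned on each qubit $m$ with $\pi_m=\rho_0$ being in state $|0\rangle$ and each qubit $m$ with $\pi_m=\rho_3$ being in state $|1\rangle$, where the number of controls $q=\#\{m:\pi_m\neq I_2\}$ satisfies $q\le\log_2(\alpha n_t n_x^\alpha)$.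
   Context: Single-qubit matrices: $\rho_0=|0\rangle\langle0|$, $\rho_1=|0\rangle\langle1|$, $\rho_2=|1\rangle\langle0|$, $\rho_3=|1\rangle\langle1|$, $\rho_4=I_2$; $\sigma_x$ is the Pauli-X matrix. For $n$ a power of 2, $I_n=I_2^{\otimes\log_2 n}$. Basis convention: index with binary expansion $b_{m-1}\cdots b_0$ corresponds to $|b_{m-1}\rangle\otimes\cdots\otimes|b_0\rangle$. The commutation matrix $K^{(a,b)}$ is the $ab\times ab$ permutation matrix with $K^{(a,b)}(x\otimes y)=y\otimes x$ for $x\in\mathbb{C}^b$, $y\in\mathbb{C}^a$. Standing data: $\alpha,n_t$ powers of 2, $n_x=2^s$ ($s\ge1$), integers $1\le j\le\alpha-1$, $0\le l\le j-1$; $Q_1=\log_2(\alpha n_t n_x^{\alpha}/n_x^{j+1})$; $r_0,\dots,r_{Q_1-1}\in\{0,\dots,4\}$; $P$ a real $n_x^2\times n_x^2$ permutation matrix (in the paper one of two specific permutations $P^\pm$); $\mathcal{D}=\rho_0^{\otimes s}\otimes I_{n_x}$; $$\mathcal{A}=\Bigl(\bigotimes_{k=0}^{Q_1-1}\rho_{r_k}\Bigr)\otimes\Bigl[\bigl(\rho_0^{\otimes s}\otimes K^{(n_x^l,n_x)}\bigr)\bigl(\mathcal{D}P\otimes I_{n_x^l}\bigr)K^{(n_x^2,n_x^l)}\Bigr]\otimes I_{n_x^{j-l-1}}.$$ $U_1$ acts on one ancilla qubit (first tensor factor) together with the $n$ qubits on which $\mathcal{A}$ acts. *)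

(* Kronecker product from mathcomp-real-closed's mxtens
   (convention: (A *t B) (i*p + j) (k*q + l) = A i k * B j l, i.e. the first
   tensor factor is the most significant digit, matching the paper). *)
From mathcomp Require Import all_boot all_order all_algebra.
From mathcomp Require Import mxtens.
Set Implicit Arguments. Unset Strict Implicit. Unset Printing Implicit Defensive.
Import GRing.Theory Num.Theory.
Local Open Scope ring_scope.

Section Q.
Variable R : realFieldType.

Definition qcast (p q : nat) (e : p = q) (A : 'M[R]_(2 ^ p)) : 'M[R]_(2 ^ q) :=
  castmx (f_equal (expn 2) e, f_equal (expn 2) e) A.

Definition qk (p q : nat) (A : 'M[R]_(2 ^ p)) (B : 'M[R]_(2 ^ q)) : 'M[R]_(2 ^ (p + q)) :=
  castmx (esym (expnD 2 p q), esym (expnD 2 p q)) (A *t B).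

Definition i0 : 'I_2 := @Ordinal 2 0 isT.
Definition i1 : 'I_2 := @Ordinal 2 1 isT.
Definition rho0 : 'M[R]_2 := delta_mx i0 i0.
Definition rho1 : 'M[R]_2 := delta_mx i0 i1.
Definition rho2 : 'M[R]_2 := delta_mx i1 i0.
Definition rho3 : 'M[R]_2 := delta_mx i1 i1.
Definition rho4 : 'M[R]_2 := 1%:M.
Definition rho (k : 'I_5) : 'M[R]_2 :=
  match val k with 0 => rho0 | 1 => rho1 | 2 => rho2 | 3 => rho3 | _ => rho4 end.
Definition sigmax : 'M[R]_2 := \matrix_(i, j) (i != j)%:R.

Lemma expn2_1 : (2 = 2 ^ 1)%N. Proof. by []. Qed.
Lemma expn2_0 : (1 = 2 ^ 0)%N. Proof. by []. Qed.

Definition q1 (A : 'M[R]_2) : 'M[R]_(2 ^ 1) := castmx (expn2_1, expn2_1) A.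

Fixpoint tensI (n : nat) : ('I_n -> 'M[R]_2) -> 'M[R]_(2 ^ n) :=
  match n return ('I_n -> 'M[R]_2) -> 'M[R]_(2 ^ n) with
  | 0 => fun _ => castmx (expn2_0, expn2_0) (1%:M : 'M[R]_1)
  | n'.+1 => fun pi => qk (q1 (pi ord0)) (tensI (fun m : 'I_n' => pi (lift ord0 m)))
  end.

Definition tpow (k : nat) (A : 'M[R]_2) : 'M[R]_(2 ^ k) := tensI (fun _ : 'I_k => A).

(* commutation matrix K^{(2^p, 2^q)}: K (x (x) y) = y (x) x for
   x in C^(2^q), y in C^(2^p). Input index ix*2^p+iy, output iy*2^q+ix. *)
Definition commK (p q : nat) : 'M[R]_(2 ^ (p + q)) :=
  \matrix_(i, i') ((i : nat) == (i' %% 2 ^ p) * 2 ^ q + i' %/ 2 ^ p)%N%:R.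

Lemma eM1 s l : (s + (s * l + s) = s * (l + 2))%N.
Proof. by rewrite mulnDr (addnC (s * l)) addnA addnn -mul2n (mulnC s 2) addnC. Qed.
Lemma eM2 s l : (s + s + s * l = s * (l + 2))%N.
Proof. by rewrite mulnDr addnn -mul2n (mulnC s 2) addnC. Qed.

Definition calD (s : nat) : 'M[R]_(2 ^ (s + s)) := qk (tpow s rho0) 1%:M.

Definition calM (s l : nat) (P : 'M[R]_(2 ^ (s + s))) : 'M[R]_(2 ^ (s * (l + 2))) :=
  qcast (eM1 s l) (qk (tpow s rho0) (commK (s * l) s))
  *m qcast (eM2 s l) (qk (calD s *m P) (1%:M : 'M[R]_(2 ^ (s * l))))
  *m qcast (eM2 s l) (commK (s + s) (s * l)).

(* Q_1 = log2(alpha n_t n_x^alpha / n_x^(j+1)), alpha = 2^a, n_t = 2^t, n_x = 2^s *)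
Definition Q1 (a t s j : nat) : nat := (a + t + s * 2 ^ a - s * j.+1)%N.

Definition nA (a t s j l : nat) : nat := (Q1 a t s j + s * (l + 2) + s * (j - l - 1))%N.

Definition calA (a t s j l : nat) (r : 'I_(Q1 a t s j) -> 'I_5)
  (P : 'M[R]_(2 ^ (s + s))) : 'M[R]_(2 ^ nA a t s j l) :=
  qk (qk (tensI (fun k => rho (r k))) (calM l P)) (1%:M : 'M[R]_(2 ^ (s * (j - l - 1)))).

Lemma eU n : (2 ^ n + 2 ^ n = 2 ^ n.+1)%N. Proof. by rewrite expnS mul2n addnn. Qed.
Definition U1 (n : nat) (Pi : 'M[R]_(2 ^ n)) : 'M[R]_(2 ^ n.+1) :=
  castmx (eU n, eU n) (block_mx (1%:M - Pi) Pi Pi (1%:M - Pi)).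

Lemma eS n : (1 + n = n.+1)%N. Proof. by []. Qed.
Definition U1_tens (n : nat) (Pi : 'M[R]_(2 ^ n)) : 'M[R]_(2 ^ n.+1) :=
  qcast (eS n) (qk (q1 sigmax) Pi + qk (q1 1%:M) (1%:M - Pi)).

Definition bit (k x : nat) : bool := odd (x %/ 2 ^ k)%N.

(* multi-controlled NOT C^qX on 1 ancilla + n qubits (ancilla = most significant
   bit n; qubit m, m : 'I_n, = tensor factor m+1 = bit n-1-m). *)
Definition mcx (n : nat) (pi : 'I_n -> 'M[R]_2) : 'M[R]_(2 ^ n.+1) :=
  \matrix_(i, i')
    (if [forall m : 'I_n, ((pi m == rho0) ==> ~~ bit (n - 1 - m)%N i')
                         && ((pi m == rho3) ==> bit (n - 1 - m)%N i')]
     then ((i : nat) == (if bit n i' then i' - 2 ^ n else i' + 2 ^ n))%N%:R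
     else ((i : nat) == i')%N%:R).

End Q.

From mathcomp Require Import all_boot all_order all_algebra all_fingroup.
From mathcomp Require Import mxtens zify.
Set Implicit Arguments. Unset Strict Implicit. Unset Printing Implicit Defensive.
Import GRing.Theory Num.Theory.
Local Open Scope ring_scope.

(* Every factor of [calA] is a Kronecker product of single-qubit matrices, of
   commutation matrices and of [P]; the last two are permutation matrices, hence
   orthogonal, so they cancel in [A A^T] and only the products [rho_k rho_k^T]
   and [rho0^{(x)s}] (a symmetric projection) survive. Each surviving factor is
   [rho0], [rho3] or [I_2], so [Pi] is the diagonal 0/1 matrix that selects the
   basis states whose bits match this control pattern, and [U1] swaps the two
   halves of the ancilla exactly on those states: a multi-controlled NOT. *)

Section NatEntries.
Variable R : pzRingType.

(* Statements about
   [entn] are insensitive to casts, so matrices of sizes [2 ^ (p + q)] and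
   [2 ^ p * 2 ^ q] can be compared without transporting along [expnD]. *)
Definition entn {m n} (A : 'M[R]_(m, n)) (i j : nat) : R :=
  if insub i is Some i' then if insub j is Some j' then A i' j' else 0 else 0.

Definition eq_entn {m n m' n'} (A : 'M[R]_(m, n)) (B : 'M[R]_(m', n')) :=
  forall i j, entn A i j = entn B i j.

Lemma entn_ord m n (A : 'M[R]_(m, n)) (i : 'I_m) (j : 'I_n) : entn A i j = A i j.
Proof. by rewrite /entn !valK. Qed.

Lemma entn_out m n (A : 'M[R]_(m, n)) i j :
  ~~ ((i < m) && (j < n))%N -> entn A i j = 0.
Proof.
rewrite /entn; case/nandP=> h; first by rewrite insubN.
by case: insub => // ?; rewrite insubN.
Qed.

Lemma entn_inj m n (A B : 'M[R]_(m, n)) :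
  (forall i j, (i < m)%N -> (j < n)%N -> entn A i j = entn B i j) -> A = B.
Proof. by move=> eqAB; apply/matrixP => i j; rewrite -!entn_ord eqAB. Qed.

Lemma entn_castmx m n m' n' (e : (m = m') * (n = n')) (A : 'M[R]_(m, n)) :
  eq_entn (castmx e A) A.
Proof. by case: e => e1 e2; case: m' / e1; case: n' / e2; rewrite castmx_id. Qed.

Lemma entnD m n (A B : 'M[R]_(m, n)) i j : entn (A + B) i j = entn A i j + entn B i j.
Proof.
by rewrite /entn; case: (insub i : option 'I_m) => [i'|]; case: (insub j : option 'I_n)
  => [j'|]; rewrite ?mxE ?addr0.
Qed.

Lemma entnN m n (A : 'M[R]_(m, n)) i j : entn (- A) i j = - entn A i j.
Proof.
by rewrite /entn; case: (insub i : option 'I_m) => [i'|]; case: (insub j : option 'I_n)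
  => [j'|]; rewrite ?mxE ?oppr0.
Qed.

Lemma entn1 n i j : entn (1%:M : 'M[R]_n) i j = ((i == j) && (i < n))%N%:R.
Proof.
have [/andP[hi hj]|hij] := boolP ((i < n) && (j < n))%N.
  by rewrite -[i]/(val (Ordinal hi)) -[j]/(val (Ordinal hj)) entn_ord mxE hi andbT.
rewrite entn_out //; case: eqP => //= eij.
by move: hij; rewrite eij andbb => /negbTE ->.
Qed.

Lemma entn_tens m n p q (A : 'M[R]_(m, n)) (B : 'M[R]_(p, q)) i j :
  (0 < p)%N -> (0 < q)%N ->
  entn (A *t B) i j = entn A (i %/ p) (j %/ q) * entn B (i %% p) (j %% q).
Proof.
move=> p_gt0 q_gt0.
have [/andP[hi hj]|hij] := boolP ((i < m * p) && (j < n * q))%N; last first.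
  by rewrite entn_out // (@entn_out _ _ A) ?mul0r // !ltn_divLR.
have [hi1 hj1] : (i %/ p < m)%N /\ (j %/ q < n)%N by rewrite !ltn_divLR.
have [hi2 hj2] : (i %% p < p)%N /\ (j %% q < q)%N by rewrite !ltn_mod.
rewrite -[i]/(val (Ordinal hi)) -[j]/(val (Ordinal hj)) entn_ord mxE.
rewrite -[(i %/ p)%N]/(val (Ordinal hi1)) -[(j %/ q)%N]/(val (Ordinal hj1)).
rewrite -[(i %% p)%N]/(val (Ordinal hi2)) -[(j %% q)%N]/(val (Ordinal hj2)) !entn_ord.
by congr (A _ _ * B _ _); apply: val_inj.
Qed.

Lemma entn_block m1 m2 n1 n2 (A : 'M[R]_(m1, n1)) (B : 'M[R]_(m1, n2))
    (C : 'M[R]_(m2, n1)) (D : 'M[R]_(m2, n2)) i j :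
  (i < m1 + m2)%N -> (j < n1 + n2)%N ->
  entn (block_mx A B C D) i j =
  if (i < m1)%N then (if (j < n1)%N then entn A i j else entn B i (j - n1))
  else (if (j < n1)%N then entn C (i - m1) j else entn D (i - m1) (j - n1)).
Proof.
move=> hi hj; rewrite -[i]/(val (Ordinal hi)) -[j]/(val (Ordinal hj)) entn_ord.
rewrite mxE; case: splitP => i' /= ->; rewrite mxE; case: splitP => j' /= ->.
all: by rewrite ?ltn_ord ?ltnNge ?leq_addr /= ?addKn entn_ord.
Qed.

End NatEntries.

Arguments entn {R m n} A i j.
Arguments eq_entn {R m n m' n'} A B.
Notation "A =e B" := (eq_entn A B) (at level 70, no associativity).

Section Bits.
Local Open Scope nat_scope.
Implicit Types (n k x y d : nat).

Lemma eqn_divmod d x y : (x == y) = (x %/ d == y %/ d) && (x %% d == y %% d).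
Proof.
apply/eqP/andP => [-> //|[/eqP eq_div /eqP eq_mod]].
by rewrite (divn_eq x d) (divn_eq y d) eq_div eq_mod.
Qed.

Lemma bit_mod k n x : k < n -> bit k (x %% 2 ^ n) = bit k x.
Proof.
move=> lt_kn; rewrite /bit -(subnK (ltnW lt_kn)) expnD -modn_divl odd_mod //.
by rewrite oddX orbF subn_eq0 leqNgt lt_kn.
Qed.

Lemma divn_bit n x : x < 2 ^ n.+1 -> x %/ 2 ^ n = bit n x.
Proof.
have : (x %/ 2 ^ n < 2) = (x < 2 ^ n.+1) by rewrite ltn_divLR ?expn_gt0 // expnS.
by rewrite /bit => <-; case: (x %/ 2 ^ n) => [|[|]].
Qed.

Lemma eqn_bitmod n x y : x < 2 ^ n.+1 -> y < 2 ^ n.+1 ->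
  (x == y) = (bit n x == bit n y) && (x %% 2 ^ n == y %% 2 ^ n).
Proof.
by move=> hx hy; rewrite (eqn_divmod (2 ^ n)) !divn_bit //; case: bit; case: bit.
Qed.

Lemma bit_low n x : x < 2 ^ n -> bit n x = false /\ x %% 2 ^ n = x.
Proof. by move=> hx; rewrite /bit divn_small ?modn_small. Qed.

Lemma bit_high n x : 2 ^ n <= x -> x < 2 ^ n.+1 ->
  bit n x = true /\ x %% 2 ^ n = x - 2 ^ n.
Proof.
move=> hx1 hx2; have hx : x = 1 * 2 ^ n + (x - 2 ^ n) by rewrite mul1n subnKC.
have lt_x : x - 2 ^ n < 2 ^ n by rewrite ltn_subLR // addnn -mul2n -expnS.
by rewrite /bit hx divnMDl ?expn_gt0 // modnMDl divn_small // modn_small // mul1n addKn.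
Qed.

Lemma eqn_flipbit n x y : x < 2 ^ n.+1 -> y < 2 ^ n.+1 ->
  (x == if bit n y then y - 2 ^ n else y + 2 ^ n) =
  (bit n x != bit n y) && (x %% 2 ^ n == y %% 2 ^ n).
Proof.
move=> hx hy; have e2 : 2 ^ n.+1 = 2 ^ n + 2 ^ n by rewrite expnS mul2n addnn.
have [ly|hy'] := ltnP y (2 ^ n).
  have [-> ->] := bit_low ly.
  have hz : y + 2 ^ n < 2 ^ n.+1 by rewrite e2 ltn_add2r.
  have [bz mz] := bit_high (leq_addl y _) hz.
  by rewrite (eqn_bitmod hx hz) bz mz addnK; case: bit.
have [-> ->] := bit_high hy' hy.
have lz : y - 2 ^ n < 2 ^ n by rewrite ltn_subLR // -e2.
have [bz mz] := bit_low lz.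
have hz : y - 2 ^ n < 2 ^ n.+1 by rewrite e2 ltn_addr.
by rewrite (eqn_bitmod hx hz) bz mz; case: bit.
Qed.

End Bits.

Section QubitKronecker.
Variable R : realFieldType.

Lemma mulmx_castmx m m' (e : m = m') (A B : 'M[R]_m) :
  castmx (e, e) A *m castmx (e, e) B = castmx (e, e) (A *m B).
Proof. by case: m' / e; rewrite !castmx_id. Qed.

Lemma castmx1 m m' (e : m = m') : castmx (e, e) (1%:M : 'M[R]_m) = 1%:M.
Proof. by case: m' / e; rewrite castmx_id. Qed.

Lemma qk_mul p q (A C : 'M[R]_(2 ^ p)) (B D : 'M[R]_(2 ^ q)) :
  qk A B *m qk C D = qk (A *m C) (B *m D).
Proof. by rewrite /qk mulmx_castmx tensmx_mul. Qed.

Lemma trmx_qk p q (A : 'M[R]_(2 ^ p)) (B : 'M[R]_(2 ^ q)) : (qk A B)^T = qk A^T B^T.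
Proof. by rewrite /qk trmx_cast trmx_tens. Qed.

Lemma qcast_mul p q (e : p = q) (A B : 'M[R]_(2 ^ p)) :
  qcast e A *m qcast e B = qcast e (A *m B).
Proof. exact: mulmx_castmx. Qed.

Lemma trmx_qcast p q (e : p = q) (A : 'M[R]_(2 ^ p)) : (qcast e A)^T = qcast e A^T.
Proof. exact: trmx_cast. Qed.

Lemma qcast1 p q (e : p = q) : qcast e (1%:M : 'M[R]_(2 ^ p)) = 1%:M.
Proof. exact: castmx1. Qed.

Lemma q1_mul (A B : 'M[R]_2) : q1 A *m q1 B = q1 (A *m B).
Proof. exact: mulmx_castmx. Qed.

Lemma trmx_q1 (A : 'M[R]_2) : (q1 A)^T = q1 A^T.
Proof. exact: trmx_cast. Qed.

Lemma q1_1 : q1 (1%:M : 'M[R]_2) = 1%:M.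
Proof. exact: castmx1. Qed.

Lemma entn_qk p q (A : 'M[R]_(2 ^ p)) (B : 'M[R]_(2 ^ q)) i j :
  entn (qk A B) i j =
  entn A (i %/ 2 ^ q)%N (j %/ 2 ^ q)%N * entn B (i %% 2 ^ q)%N (j %% 2 ^ q)%N.
Proof. by rewrite /qk entn_castmx entn_tens ?expn_gt0. Qed.

Lemma entn_qcast p q (e : p = q) (A : 'M[R]_(2 ^ p)) : qcast e A =e A.
Proof. exact: entn_castmx. Qed.

Lemma entn_q1 (A : 'M[R]_2) : q1 A =e A.
Proof. exact: entn_castmx. Qed.

Lemma entn_q1k n (X : 'M[R]_2) (Y : 'M[R]_(2 ^ n)) i j :
  (i < 2 ^ n.+1)%N -> (j < 2 ^ n.+1)%N ->
  entn (qk (q1 X) Y) i j =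
  entn X (bit n i) (bit n j) * entn Y (i %% 2 ^ n)%N (j %% 2 ^ n)%N.
Proof. by move=> hi hj; rewrite entn_qk entn_q1 !divn_bit. Qed.

Lemma qk11 p q : qk (1%:M : 'M[R]_(2 ^ p)) (1%:M : 'M[R]_(2 ^ q)) = 1%:M.
Proof.
apply: entn_inj => i j _ _; rewrite entn_qk !entn1 -natrM mulnb (eqn_divmod (2 ^ q) i j).
rewrite ltn_mod expn_gt0 andbT ltn_divLR ?expn_gt0 // -expnD.
by rewrite andbAC.
Qed.

Lemma qk_assoc p q r (A : 'M[R]_(2 ^ p)) (B : 'M[R]_(2 ^ q)) (C : 'M[R]_(2 ^ r)) :
  qk (qk A B) C =e qk A (qk B C).
Proof.
move=> i j; rewrite !entn_qk -mulrA expnD.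
have div_div k : (k %/ (2 ^ q * 2 ^ r) = k %/ 2 ^ r %/ 2 ^ q)%N by rewrite mulnC divnMA.
have mod_div k : (k %/ 2 ^ r %% 2 ^ q = k %% (2 ^ q * 2 ^ r) %/ 2 ^ r)%N.
  by rewrite modn_divl.
have mod_mod k : (k %% (2 ^ q * 2 ^ r) %% 2 ^ r = k %% 2 ^ r)%N.
  by rewrite modn_dvdm // dvdn_mull.
by rewrite !div_div !mod_div !mod_mod.
Qed.

Lemma eq_entn_qk p p' q q' (A : 'M[R]_(2 ^ p)) (A' : 'M[R]_(2 ^ p'))
    (B : 'M[R]_(2 ^ q)) (B' : 'M[R]_(2 ^ q')) :
  q = q' -> A =e A' -> B =e B' -> qk A B =e qk A' B'.
Proof. by move=> eq_q; case: q' / eq_q in B' * => eqA eqB i j; rewrite !entn_qk eqA eqB. Qed.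

End QubitKronecker.

Section TensorOfQubits.
Variable R : realFieldType.
Lemma eq_tensI n (f g : 'I_n -> 'M[R]_2) : f =1 g -> tensI f = tensI g.
Proof.
elim: n f g => [|n IH] f g eq_fg //=.
by rewrite eq_fg (IH _ (fun m => g (lift ord0 m))) // => m; rewrite eq_fg.
Qed.

Lemma tensI_mul n (f g : 'I_n -> 'M[R]_2) :
  tensI f *m tensI g = tensI (fun m => f m *m g m).
Proof.
elim: n f g => [|n IH] f g /=; first by rewrite mulmx_castmx mulmx1.
by rewrite -IH -q1_mul; exact: (qk_mul (p := 1)).
Qed.

Lemma trmx_tensI n (f : 'I_n -> 'M[R]_2) : (tensI f)^T = tensI (fun m => (f m)^T).
Proof.
elim: n f => [|n IH] f /=; first by rewrite trmx_cast trmx1.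
by rewrite -IH -trmx_q1; exact: (trmx_qk (p := 1)).
Qed.

Lemma tensI1 n : tensI (fun _ : 'I_n => 1%:M) = 1%:M :> 'M[R]_(2 ^ n).
Proof.
elim: n => [|n IH] /=; first exact: castmx1.
by rewrite IH q1_1 qk11.
Qed.

Lemma tensI_ord0 (f : 'I_0 -> 'M[R]_2) : tensI f = 1%:M.
Proof. by rewrite -(tensI1 0); apply: eq_tensI => -[]. Qed.

Lemma qk1l q (B : 'M[R]_(2 ^ q)) : qk (1%:M : 'M[R]_(2 ^ 0)) B =e B.
Proof. by rewrite /qk tens_scalar1mx => i j; rewrite !entn_castmx. Qed.

Lemma tensI_cat p q (h : 'I_(p + q) -> 'M[R]_2) :
  tensI h =e qk (tensI (fun m => h (lshift q m))) (tensI (fun m => h (rshift p m))).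
Proof.
elim: p h => [|p IH] h i j.
  by rewrite tensI_ord0 qk1l; congr entn; apply: eq_tensI => m; congr h; apply: val_inj.
pose h' (m : 'I_(p + q)) := h (lift ord0 m).
have h_lshift : tensI (fun m : 'I_p.+1 => h (lshift q m)) =
    qk (q1 (h ord0)) (tensI (fun m : 'I_p => h' (lshift q m))).
  rewrite [LHS]/=; congr (qk (q1 (h _)) _); first exact: val_inj.
  by apply: eq_tensI => m; congr h; apply: val_inj.
have h_rshift : tensI (fun m : 'I_q => h (rshift p.+1 m)) = tensI (fun m => h' (rshift p m)).
  by apply: eq_tensI => m; congr h; apply: val_inj.
rewrite h_lshift h_rshift (qk_assoc (q1 (h ord0))).
exact: (eq_entn_qk (p := 1) (p' := 1) erefl (fun _ _ => erefl) (IH h') i j).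
Qed.

Lemma tensI_cast n n' (e : n = n') (f : 'I_n -> 'M[R]_2) :
  tensI f =e tensI (fun m : 'I_n' => f (cast_ord (esym e) m)).
Proof.
case: n' / e => i j; congr entn; apply: eq_tensI => m.
by rewrite cast_ord_id.
Qed.

End TensorOfQubits.

Section Controls.
Variable R : realFieldType.

Definition ctrl_mx (X : 'M[R]_2) : Prop := X = rho0 R \/ X = rho3 R \/ X = 1%:M.

Definition ctrl_bit (X : 'M[R]_2) (b : bool) : bool :=
  ((X == rho0 R) ==> ~~ b) && ((X == rho3 R) ==> b).

Definition ctrl_on n (pi : 'I_n -> 'M[R]_2) (x : nat) : bool :=
  [forall m : 'I_n, ctrl_bit (pi m) (bit (n - 1 - m) x)].

Lemma entn_mx2 (X : 'M[R]_2) (b b' : bool) :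
  entn X b b' = X (Ordinal (leq_b1 b : b < 2)%N) (Ordinal (leq_b1 b' : b' < 2)%N).
Proof. by rewrite -entn_ord. Qed.

Lemma entn_ctrl X (b b' : bool) : ctrl_mx X ->
  entn X b b' = ((b == b') && ctrl_bit X b')%:R.
Proof.
have rho_neq (Y Z : 'M[R]_2) k : Y k k != Z k k -> (Y == Z) = false.
  by move=> neq; apply/negbTE; apply: contra neq => /eqP ->.
have n30 : (rho3 R == rho0 R) = false by apply: (rho_neq _ _ i1); rewrite !mxE oner_eq0.
have n10 : (1%:M == rho0 R) = false by apply: (rho_neq _ _ i1); rewrite !mxE oner_eq0.
have n13 : (1%:M == rho3 R) = false by apply: (rho_neq _ _ i0); rewrite !mxE oner_eq0.
rewrite /ctrl_bit entn_mx2.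
by case=> [|[|]] ->; rewrite ?eqxx ?n30 ?n10 ?n13 ?(eq_sym (rho0 R)) ?n30;
  case: b; case: b'; rewrite !mxE.
Qed.

Lemma ctrl_on_mod n (pi : 'I_n -> 'M[R]_2) x : ctrl_on pi (x %% 2 ^ n) = ctrl_on pi x.
Proof. by apply: eq_forallb => m; rewrite bit_mod //; have := ltn_ord m; lia. Qed.

Lemma ctrl_onS n (pi : 'I_n.+1 -> 'M[R]_2) x :
  ctrl_on pi x =
  ctrl_bit (pi ord0) (bit n x) && ctrl_on (fun m : 'I_n => pi (lift ord0 m)) (x %% 2 ^ n).
Proof.
have bit_lift (m : 'I_n) :
    bit (n.+1 - 1 - lift ord0 m) x = bit (n - 1 - m) (x %% 2 ^ n).
  rewrite bit_mod /= /bump ?leq0n ?add1n; last by have := ltn_ord m; lia.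
  by have -> : (n.+1 - 1 - m.+1 = n - 1 - m)%N by lia.
have bit_ord0 : bit (n.+1 - 1 - 0) x = bit n x by rewrite subn1 subn0.
rewrite /ctrl_on; apply/forallP/andP => [ctrl_x|[ctrl0 /forallP ctrlS] m].
  split; first by have := ctrl_x ord0; rewrite bit_ord0.
  by apply/forallP => m; rewrite -bit_lift.
by case: (unliftP ord0 m) => [m'|] ->; rewrite ?bit_lift ?bit_ord0.
Qed.

Lemma tensI_ctrl n (pi : 'I_n -> 'M[R]_2) i j : (forall m, ctrl_mx (pi m)) ->
  (i < 2 ^ n)%N -> (j < 2 ^ n)%N ->
  entn (tensI pi) i j = ((i == j) && ctrl_on pi j)%:R.
Proof.
elim: n pi i j => [|n IH] pi i j ctrl_pi hi hj.
  move: hi hj; rewrite tensI_ord0 entn1 !expn0 !ltnS !leqn0 => /eqP -> /eqP ->.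
  by have -> : ctrl_on pi 0 by apply/forallP => -[].
have [hi' hj'] : (i %% 2 ^ n < 2 ^ n)%N /\ (j %% 2 ^ n < 2 ^ n)%N by rewrite !ltn_mod expn_gt0.
rewrite [tensI pi]/= entn_q1k // entn_ctrl // IH // -natrM mulnb.
by rewrite (eqn_bitmod hi hj) ctrl_onS andbACA.
Qed.

End Controls.

Section ControlledNot.
Variable R : realFieldType.
Lemma entn_U1 n (Pi : 'M[R]_(2 ^ n)) i j : (i < 2 ^ n.+1)%N -> (j < 2 ^ n.+1)%N ->
  entn (U1 Pi) i j =
  entn (if bit n i == bit n j then 1%:M - Pi else Pi) (i %% 2 ^ n)%N (j %% 2 ^ n)%N.
Proof.
move=> hi hj; rewrite /U1 entn_castmx entn_block ?eU //.
have [li|li] := ltnP i (2 ^ n); have [lj|lj] := ltnP j (2 ^ n).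
- by have [-> ->] := bit_low li; have [-> ->] := bit_low lj.
- by have [-> ->] := bit_low li; have [-> ->] := bit_high lj hj.
- by have [-> ->] := bit_high li hi; have [-> ->] := bit_low lj.
- by have [-> ->] := bit_high li hi; have [-> ->] := bit_high lj hj.
Qed.

Lemma U1_tensE n (Pi : 'M[R]_(2 ^ n)) : U1 Pi = U1_tens Pi.
Proof.
apply: entn_inj => i j hi hj; rewrite entn_U1 // entn_qcast entnD !entn_q1k //.
by rewrite !entn_mx2; case: bit; case: bit; rewrite !mxE /= ?mul0r ?mul1r ?add0r ?addr0.
Qed.

Lemma entn_mcx n (pi : 'I_n -> 'M[R]_2) i j : (i < 2 ^ n.+1)%N -> (j < 2 ^ n.+1)%N ->
  entn (mcx pi) i j =
  if ctrl_on pi j then (i == if bit n j then j - 2 ^ n else j + 2 ^ n)%N%:R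
  else (i == j)%:R.
Proof. by move=> hi hj; rewrite -[i]/(val (Ordinal hi)) -[j]/(val (Ordinal hj)) entn_ord mxE. Qed.

Lemma U1_mcx n (pi : 'I_n -> 'M[R]_2) : (forall m, ctrl_mx (pi m)) -> U1 (tensI pi) = mcx pi.
Proof.
move=> ctrl_pi; apply: entn_inj => i j hi hj.
have [hi' hj'] : (i %% 2 ^ n < 2 ^ n)%N /\ (j %% 2 ^ n < 2 ^ n)%N by rewrite !ltn_mod expn_gt0.
rewrite entn_U1 // entn_mcx // (fun_if (fun M => entn M _ _)) entnD entnN entn1.
rewrite !tensI_ctrl // ctrl_on_mod (eqn_bitmod hi hj) (eqn_flipbit hi hj) hi' andbT.
by case: eqP; case: eqP; case: ctrl_on; rewrite /= ?subrr ?subr0.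
Qed.

End ControlledNot.

Section Gram.
Variable R : realFieldType.

Lemma is_perm_mx_mulmxT n (P : 'M[R]_n) : is_perm_mx P -> P *m P^T = 1%:M.
Proof. by case/is_perm_mxP => sigma ->; rewrite tr_perm_mx -perm_mxM mulgV perm_mx1. Qed.

Lemma mulmxT_orthr n (X Y Z : 'M[R]_n) : Z *m Z^T = 1%:M ->
  (X *m Y *m Z) *m (X *m Y *m Z)^T = X *m (Y *m Y^T) *m X^T.
Proof. by move=> orthZ; rewrite !trmx_mul !mulmxA -(mulmxA _ Z) orthZ mulmx1. Qed.

Section Commutation.
Variables p q : nat.

Let lt_div i : (i < 2 ^ (p + q))%N -> (i %/ 2 ^ p < 2 ^ q)%N.
Proof. by move=> lt_i; rewrite ltn_divLR ?expn_gt0 // mulnC -expnD. Qed.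

Lemma commK_index_subproof i : (i < 2 ^ (p + q))%N ->
  (i %% 2 ^ p * 2 ^ q + i %/ 2 ^ p < 2 ^ (p + q))%N.
Proof.
move=> lt_i; have lt_mod : (i %% 2 ^ p < 2 ^ p)%N by rewrite ltn_mod expn_gt0.
rewrite expnD; apply: (@leq_trans ((i %% 2 ^ p).+1 * 2 ^ q)).
  by rewrite mulSn addnC ltn_add2r lt_div.
by rewrite leq_mul2r lt_mod orbT.
Qed.

Definition commK_index (i : 'I_(2 ^ (p + q))) := Ordinal (commK_index_subproof (ltn_ord i)).

Lemma commK_index_inj : injective commK_index.
Proof.
move=> i1 i2 /(congr1 val) /= /eqP.
rewrite eq_addl_mul ?lt_div // xpair_eqE => /andP[/eqP eq_mod /eqP eq_div].
by apply: val_inj; rewrite /= (divn_eq i1 (2 ^ p)) (divn_eq i2 (2 ^ p)) eq_mod eq_div.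
Qed.

Lemma is_perm_mx_commK : is_perm_mx (commK R p q).
Proof.
apply/is_perm_mxP; exists (perm commK_index_inj)^-1%g; rewrite -tr_perm_mx.
by apply/matrixP => i j; rewrite !mxE permE eq_sym.
Qed.

End Commutation.

Lemma trmx_rho0 : (rho0 R)^T = rho0 R.
Proof. exact: trmx_delta. Qed.

Lemma rho0_idem : rho0 R *m rho0 R = rho0 R.
Proof. exact: mul_delta_mx. Qed.

Lemma ctrl_mx_rho_mulmxT k : ctrl_mx (rho R k *m (rho R k)^T).
Proof.
rewrite /ctrl_mx /rho; case: k => [[|[|[|[|k]]]] /= _];
  rewrite ?trmx1 ?mulmx1 /rho0 /rho1 /rho2 /rho3 ?trmx_delta ?mul_delta_mx; by auto.
Qed.

Lemma trmx_tpow_rho0 s : (tpow s (rho0 R))^T = tpow s (rho0 R).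
Proof. by rewrite trmx_tensI; apply: eq_tensI => m; rewrite trmx_rho0. Qed.

Lemma tpow_rho0_idem s : tpow s (rho0 R) *m tpow s (rho0 R) = tpow s (rho0 R).
Proof. by rewrite tensI_mul; apply: eq_tensI => m; rewrite rho0_idem. Qed.

Lemma calD_mulmxT s : calD R s *m (calD R s)^T = calD R s.
Proof. by rewrite /calD trmx_qk qk_mul trmx_tpow_rho0 tpow_rho0_idem trmx1 mulmx1. Qed.

Lemma qcast_calD s l :
  qcast (eM2 s l) (qk (calD R s) (1%:M : 'M[R]_(2 ^ (s * l)))) =
  qcast (eM1 s l) (qk (tpow s (rho0 R)) 1%:M).
Proof.
apply: entn_inj => i j _ _; rewrite !entn_qcast /calD qk_assoc qk11.
by apply: eq_entn_qk => // [|i' j']; rewrite ?entn1 addnC.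
Qed.

Lemma calM_mulmxT s l (P : 'M[R]_(2 ^ (s + s))) : is_perm_mx P ->
  calM l P *m (calM l P)^T = qcast (eM1 s l) (qk (tpow s (rho0 R)) 1%:M).
Proof.
move=> permP; rewrite /calM mulmxT_orthr; last first.
  by rewrite trmx_qcast qcast_mul is_perm_mx_mulmxT ?qcast1 ?is_perm_mx_commK.
rewrite trmx_qcast qcast_mul trmx_qk qk_mul trmx1 mulmx1 trmx_mul mulmxA.
rewrite -(mulmxA _ P) is_perm_mx_mulmxT // mulmx1 calD_mulmxT qcast_calD.
by rewrite !trmx_qcast !qcast_mul !trmx_qk !qk_mul trmx_tpow_rho0 !tpow_rho0_idem
  mulmx1 is_perm_mx_mulmxT ?is_perm_mx_commK.
Qed.

End Gram.

Lemma split_lshift m n (i : 'I_m) : split (lshift n i) = inl i.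
Proof. exact: (unsplitK (inl i)). Qed.

Lemma split_rshift m n (i : 'I_n) : split (rshift m i) = inr i.
Proof. exact: (unsplitK (inr i)). Qed.

Section Projector.
Variable R : realFieldType.
Variables (a t s j l : nat) (r : 'I_(Q1 a t s j) -> 'I_5).

Definition piA : 'I_(nA a t s j l) -> 'M[R]_2 := fun m =>
  match split (m : 'I_(Q1 a t s j + s * (l + 2) + s * (j - l - 1))) with
  | inl m1 => match split m1 with
    | inl k => rho R (r k) *m (rho R (r k))^T
    | inr k => if (k < s)%N then rho0 R else 1%:M
    end
  | inr _ => 1%:M
  end.

Lemma ctrl_mx_piA m : ctrl_mx (piA m).
Proof.
rewrite /piA; case: split => [m1|_]; last by right; right.
case: split => [k|k]; first exact: ctrl_mx_rho_mulmxT.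
by case: ifP => _; [left | right; right].
Qed.

Lemma calA_mulmxT (P : 'M[R]_(2 ^ (s + s))) : is_perm_mx P ->
  calA l r P *m (calA l r P)^T = tensI piA.
Proof.
move=> permP; rewrite /calA !trmx_qk !qk_mul calM_mulmxT // trmx_tensI tensI_mul.
rewrite trmx1 mulmx1; apply: entn_inj => i0 j0 _ _; symmetry.
rewrite (tensI_cat (p := (Q1 a t s j + s * (l + 2))%N)); move: i0 j0.
apply: eq_entn_qk => //; last first.
  by rewrite -(tensI1 R (s * (j - l - 1))%N) => i' j'; congr entn; apply: eq_tensI => m;
    rewrite /piA split_rshift.
move=> i0 j0; rewrite (tensI_cat (p := Q1 a t s j)); move: i0 j0.
apply: eq_entn_qk => //.
  by move=> i' j'; congr entn; apply: eq_tensI => m; rewrite /piA !split_lshift.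
move=> i' j'; rewrite entn_qcast (tensI_cast (esym (eM1 s l))) tensI_cat; move: i' j'.
apply: eq_entn_qk => //.
  by move=> i' j'; congr entn; apply: eq_tensI => m;
    rewrite /piA split_lshift split_rshift /= ltn_ord.
rewrite -(tensI1 R (s * l + s)%N) => i' j'; congr entn; apply: eq_tensI => m.
by rewrite /piA split_lshift split_rshift /= ltnNge leq_addr.
Qed.

End Projector.

Lemma nA_eq a t s j l : (1 <= j <= 2 ^ a - 1)%N -> (l <= j - 1)%N ->
  nA a t s j l = (a + t + s * 2 ^ a)%N.
Proof.
case/andP=> j_ge1 j_lt hl.
have sj_le : (s * j.+1 <= s * 2 ^ a)%N.
  by rewrite leq_mul2l; have := expn_gt0 2 a; lia.
have tail : (s * (l + 2) + s * (j - l - 1) = s * j.+1)%N by rewrite -mulnDr; congr muln; lia.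
rewrite /nA /Q1 -addnA tail subnK //.
exact: leq_trans sj_le (leq_addl _ _).
Qed.

Theorem theorem3 (R : realFieldType) (a t s j l : nat)
  (r : 'I_(Q1 a t s j) -> 'I_5) (P : 'M[R]_(2 ^ (s + s))) :
  (1 <= s)%N -> (1 <= j <= 2 ^ a - 1)%N -> (l <= j - 1)%N ->
  is_perm_mx P ->
  let A := @calA R a t s j l r P in
  let Pi := A *m A^T in
  exists pi : 'I_(nA a t s j l) -> 'M[R]_2,
    (forall m, pi m = rho0 R \/ pi m = rho3 R \/ pi m = 1%:M) /\
    Pi = tensI pi /\
    U1 Pi = U1_tens Pi /\
    U1 Pi = mcx pi /\
    nA a t s j l = (a + t + s * 2 ^ a)%N /\
    (#|[set m | pi m != 1%:M]| <= a + t + s * 2 ^ a)%N.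
Proof.
move=> _ hj hl permP A Pi.
have PiE : Pi = tensI (piA R r) by exact: calA_mulmxT.
exists (piA R r); split; first exact: ctrl_mx_piA.
split; first exact: PiE.
split; first exact: U1_tensE.
split; first by rewrite PiE; apply: U1_mcx; apply: ctrl_mx_piA.
split; first exact: nA_eq.
by rewrite -(nA_eq t s hj hl); apply: leq_trans (max_card _) _; rewrite card_ord.
Qed.
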